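(* Let $n\ge 2$, $\mathcal{O}\in\mathcal{C}_c^{(n)}$, $\nu\in(0,1]$, and $\mathcal{J}\in\mathbf{J}_{\mathcal{O}}^{\nu}$. Then there is a constant $\mu_{n,\nu}$ depending only on $n$ and $\nu$ such that $\|\mathcal{J}\|_2\le\mu_{n,\nu}$, $0\le\mu_{n,\nu}<1$.
   Context: $\imath=\sqrt{-1}$. For $1\le i<j\le n$ and real $\phi,\alpha$, $R(i,j,\phi,\alpha)$ is the $n\times n$ matrix equal to $I_n$ except for entries $(i,i)=(j,j)=\cos\phi$, $(i,j)=-e^{\imath\alpha}\sin\phi$, $(j,i)=e^{-\imath\alpha}\sin\phi$. Let $N=n(n-1)/2$. For $A=(a_{st})\in\mathbb{C}^{n\times n}$ let $c_t=(a_{1t},\dots,a_{t-1,t})^T$, $r_s=(a_{s1},\dots,a_{s,s-1})$ ($2\le s,t\le n$) and $\mathrm{ve}(A)=[c_2^T,\dots,c_n^T,r_2,\dots,r_n]^T\in\mathbb{C}^{2N}$. Let $\nu_{ij}$ be the linear map on $\mathbb{C}^{n\times n}$ setting entries $(i,j),(j,i)$ to zero. For $U=R(i,j,\phi,\alpha)$ the Jacobi annihilator $\mathcal{R}_{ij}(U)$ is the $2N\times 2N$ matrix with $\mathcal{R}_{ij}(U)\mathrm{ve}(A)=\mathrm{ve}(\nu_{ij}(U^*AU))$ for all $A$. For $\nu\in[0,1]$, $\mathbf{R}_{ij}^{\nu}=\{\mathcal{R}_{ij}(U): U=R(i,j,\phi,\alpha),\ |\cos\phi|\ge\nu\}$.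 Let $\mathcal{P}_n=\{(r,s):1\le r<s\le n\}$. For an ordering $\mathcal{O}=(i_0,j_0),\dots,(i_{N-1},j_{N-1})$ of $\mathcal{P}_n$ (each pair exactly once), the class of Jacobi operators is $\mathbf{J}_{\mathcal{O}}^{\nu}=\{\mathcal{R}_{i_{N-1}j_{N-1}}\cdots\mathcal{R}_{i_1j_1}\mathcal{R}_{i_0j_0}: \mathcal{R}_{i_kj_k}\in\mathbf{R}_{i_kj_k}^{\nu},\ 0\le k\le N-1\}$. $\|\cdot\|_2$ is the spectral norm. $\mathcal{C}_c^{(n)}$ is the set of orderings of the form $(1,2),(\tau_3(1),3),(\tau_3(2),3),\dots,(\tau_n(1),n),\dots,(\tau_n(n-1),n)$, each $\tau_j$ a permutation of $\{1,\dots,j-1\}$, $3\le j\le n$. *)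

From HB Require Import structures.
From mathcomp Require Import all_boot all_order all_algebra all_fingroup.
From mathcomp Require Import boolp classical_sets reals trigo.
From mathcomp Require Import complex.

Set Implicit Arguments.
Unset Strict Implicit.
Unset Printing Implicit Defensive.
Import Order.TTheory GRing.Theory Num.Theory.
Local Open Scope ring_scope.

Section Jacobi.
Variable R : realType.
Local Notation C := (R[i]).

Definition expi (a : R) : C := Complex (cos a) (sin a).
Definition toC (x : R) : C := Complex x 0.

(* R(i,j,phi,alpha) ; indices are 0-based ('I_n), i < j assumed by the caller *)
Definition rot (n : nat) (i j : 'I_n) (phi alpha : R) : 'M[C]_n :=
  \matrix_(s < n, t < n)
    if (s == i) && (t == i) then toC (cos phi)
    else if (s == j) && (t == j) then toC (cos phi)
    else if (s == i) && (t == j) then - expi alpha * toC (sin phi)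
    else if (s == j) && (t == i) then conjc (expi alpha) * toC (sin phi)
    else if s == t then 1 else 0.

Definition adj_mx (n m : nat) (A : 'M[C]_(n, m)) : 'M[C]_(m, n) :=
  \matrix_(s, t) conjc (A t s).

Definition Npairs (n : nat) : nat := (n * n.-1)./2.

(* 0-based position of the upper entry (p,q), p<q, within [c_2;...;c_n] *)
Definition pidx (p q : nat) : nat := (q * q.-1)./2 + p.

(* ve(A) = [c_2^T, ..., c_n^T, r_2, ..., r_n]^T *)
Definition ve (n : nat) (A : 'M[C]_n) : 'cV[C]_(Npairs n + Npairs n) :=
  \col_k \sum_(p < n) \sum_(q < n)
     (if (p < q)%N && (k == pidx p q :> nat) then A p q
      else if (p < q)%N && (k == Npairs n + pidx p q :> nat) then A q p
      else 0).

Definition nuij (n : nat) (i j : 'I_n) (A : 'M[C]_n) : 'M[C]_n :=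
  \matrix_(s, t) if ((s == i) && (t == j)) || ((s == j) && (t == i)) then 0
                 else A s t.

Definition is_annihilator (n : nat) (i j : 'I_n) (U : 'M[C]_n)
  (M : 'M[C]_(Npairs n + Npairs n)) : Prop :=
  forall A : 'M[C]_n, M *m ve A = ve (nuij i j (adj_mx U *m A *m U)).

Definition annihilators (n : nat) (nu : R) (i j : 'I_n)
  (M : 'M[C]_(Npairs n + Npairs n)) : Prop :=
  exists phi alpha : R, nu <= `|cos phi| /\
    is_annihilator i j (rot i j phi alpha) M.

(* J_O^nu for an ordering O = (i_0,j_0), ..., (i_{N-1},j_{N-1}):
   products R_{i_{N-1}j_{N-1}} ... R_{i_0 j_0} *)
Fixpoint jacobi_ops (n : nat) (nu : R) (O : seq ('I_n * 'I_n))
  (J : 'M[C]_(Npairs n + Npairs n)) : Prop :=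
  match O with
  | [::] => J = 1%:M
  | (i, j) :: O' => exists J' M, jacobi_ops nu O' J' /\
      annihilators nu i j M /\ J = J' *m M
  end.

Definition vnorm (m : nat) (x : 'cV[C]_m) : R :=
  Num.sqrt (\sum_k (complex.Re (x k 0) ^+ 2 + complex.Im (x k 0) ^+ 2)).

Definition spec_norm (m : nat) (A : 'M[C]_m) : R :=
  sup [set vnorm (A *m x) | x in [set x : 'cV[C]_m | vnorm x <= 1]]%classic.

End Jacobi.

(* The class C_c^(n) (0-based indices): orderings
   (tau_1(0),1), (tau_2(0),2),(tau_2(1),2), ..., (tau_{n-1}(0),n-1),...,(tau_{n-1}(n-2),n-1)
   with each tau_j a permutation of {0,...,j-1}. *)
Definition widen_lt (n : nat) (j : 'I_n) (i : 'I_j) : 'I_n :=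
  widen_ord (ltnW (ltn_ord j)) i.

Definition col_cyclic (n : nat) (O : seq ('I_n * 'I_n)) : Prop :=
  exists tau : forall j : 'I_n, {perm 'I_j},
    O = flatten [seq [seq (widen_lt (tau j i), j) | i <- enum 'I_j]
                | j <- enum 'I_n].

(* The annihilator of the pivot (i, j) acts on ve(A) as the Jacobi step
   A |-> nu_ij(U^* A U), and ve is an isometry from the off-diagonal part of A
   onto C^(2N); so it suffices that a column-cyclic sweep contracts the
   squared off-norm off(A) by a fixed factor.  A step with pivot (i, j) mixes
   rows i, j and columns i, j by a unitary 2x2 rotation, hence lowers the
   squared off-norm of every leading principal block containing i and j by
   exactly |a_ij|^2 + |a_ji|^2.  Induct on the leading blocks: after the first
   m columns, off_m(B) <= q_m off_m(A).  While column m is swept, each entry of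
   row and column m keeps at every step a fraction nu^2/2 of its weight, up to
   an error bounded by the small off_m of the block already treated, so
   annihilating it removes at least (nu^2/2)^m of the border weight minus
   2 m^2 off_m.  Interpolating between this gain and the trivial bound
   gives q_(m+1) < 1. *)

From Pilot Require Import Defs.
From HB Require Import structures.
From mathcomp Require Import all_boot all_order all_algebra all_fingroup.
From mathcomp Require Import boolp classical_sets reals trigo.
From mathcomp Require Import complex.
From mathcomp Require Import ring lra zify.
Import Order.TTheory GRing.Theory Num.Theory.
Local Open Scope ring_scope.

Section JacobiContraction.
Set Implicit Arguments.
Unset Strict Implicit.
Variable R : realType.
Local Notation C := R[i].

Definition sqnorm (z : C) : R := complex.Re z ^+ 2 + complex.Im z ^+ 2.

Lemma sqnorm_ge0 z : 0 <= sqnorm z.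
Proof. by rewrite addr_ge0 ?sqr_ge0. Qed.

Lemma sqnorm0 : sqnorm 0 = 0.
Proof. by rewrite /sqnorm /= expr0n addr0. Qed.

Lemma sqnormN z : sqnorm (- z) = sqnorm z.
Proof. by case: z => a b; rewrite /sqnorm /= !sqrrN. Qed.

Lemma sqnormM x y : sqnorm (x * y) = sqnorm x * sqnorm y.
Proof. by case: x => a b; case: y => c d; rewrite /sqnorm /=; ring. Qed.

Lemma sqnorm_conj z : sqnorm (conjc z) = sqnorm z.
Proof. by case: z => a b; rewrite /sqnorm /= sqrrN. Qed.

Lemma sqnorm_real x : sqnorm (toC x) = x ^+ 2.
Proof. by rewrite /sqnorm /= expr0n addr0. Qed.

Lemma sqnorm_expi a : sqnorm (expi a) = 1.
Proof. exact: cos2Dsin2. Qed.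

Lemma sqnormD_ge x y : sqnorm x / 2 - sqnorm y <= sqnorm (x + y).
Proof.
case: x => a b; case: y => c d; rewrite /sqnorm /=.
have := sqr_ge0 (a + 2 * c); have := sqr_ge0 (b + 2 * d); nra.
Qed.

Lemma sqnorm_combination_ge (k : R) u v x y :
  k <= sqnorm u -> sqnorm v <= 1 ->
  k / 2 * sqnorm x - sqnorm y <= sqnorm (u * x + v * y).
Proof.
move=> ku v1; apply: le_trans (sqnormD_ge _ _); rewrite !sqnormM.
have := sqnorm_ge0 x; have := sqnorm_ge0 y; nra.
Qed.

Lemma sqnorm_rot2 (c s : R) z x y : c ^+ 2 + s ^+ 2 = 1 -> sqnorm z = 1 ->
  sqnorm (toC c * x + z * toC s * y) + sqnorm (- (conjc z * toC s) * x + toC c * y)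
  = sqnorm x + sqnorm y.
Proof.
case: z => z1 z2; case: x => a b; case: y => p q; rewrite /sqnorm /= => cs1 z1'.
transitivity ((c ^+ 2 + s ^+ 2 * (z1 ^+ 2 + z2 ^+ 2)) *
              (a ^+ 2 + b ^+ 2 + (p ^+ 2 + q ^+ 2))); first by ring.
by rewrite z1' mulr1 cs1 mul1r.
Qed.

Section JacobiStep.
Variable n : nat.
Variables (i j : 'I_n) (phi alpha : R).
Hypothesis neq_ij : i != j.
Implicit Types A X : 'M[C]_n.
Local Notation U := (Defs.rot i j phi alpha).
Local Notation cphi := (toC (cos phi)).
Local Notation sphi := (toC (sin phi)).
Local Notation ealpha := (expi alpha).

Let neq_ji : j != i. Proof. by rewrite eq_sym. Qed.

Lemma rotE (a b : 'I_n) : U a b =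
  if b == i then (if a == i then cphi else if a == j then conjc ealpha * sphi else 0)
  else if b == j then (if a == i then - ealpha * sphi else if a == j then cphi else 0)
  else (if a == b then 1 else 0).
Proof.
rewrite mxE.
have [->|bi] := eqVneq b i; have [->|ai] := eqVneq a i;
  rewrite ?eqxx ?(negbTE neq_ij) ?(negbTE neq_ji) ?andbF ?andbT //=.
by have [->|] := eqVneq b j; rewrite ?andbT ?andbF //; case: eqVneq.
Qed.

Lemma sum_supp2 (f : 'I_n -> C) u v :
  \sum_b (if b == i then u else if b == j then v else 0) * f b = u * f i + v * f j.
Proof.
rewrite (bigD1 i) //= eqxx (bigD1 j) //= eqxx (negbTE neq_ji).
rewrite big1 ?addr0 // => b /andP[bi bj].
by rewrite (negbTE bi) (negbTE bj) mul0r.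
Qed.

Lemma sum_supp1 (f : 'I_n -> C) t :
  \sum_b (if b == t then 1 else 0) * f b = f t.
Proof.
rewrite (bigD1 t) //= eqxx mul1r big1 ?addr0 // => b bt.
by rewrite (negbTE bt) mul0r.
Qed.

Lemma mulmx_rotE X a t : (X *m U) a t =
  if t == i then X a i * cphi + X a j * (conjc ealpha * sphi)
  else if t == j then X a i * (- ealpha * sphi) + X a j * cphi else X a t.
Proof.
rewrite mxE; under eq_bigr => b _ do rewrite mulrC rotE.
have [_|ti] := eqVneq t i; first by rewrite sum_supp2 ![_ * X _ _]mulrC.
have [_|tj] := eqVneq t j; first by rewrite sum_supp2 ![_ * X _ _]mulrC.
exact: sum_supp1.
Qed.

Let conjc_real (x : R) : conjc (toC x) = toC x.
Proof. by rewrite /conjc /toC /= oppr0. Qed.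

Let conjc_row_i : conjc (conjc ealpha * sphi) = ealpha * sphi.
Proof. by rewrite /expi /toC /conjc; simpc. Qed.

Let conjc_col_j : conjc (- ealpha * sphi) = - (conjc ealpha * sphi).
Proof. by rewrite /expi /toC /conjc; simpc. Qed.

Lemma adj_rot_mulmxE X a t : (adj_mx U *m X) a t =
  if a == i then cphi * X i t + ealpha * sphi * X j t
  else if a == j then - (conjc ealpha * sphi) * X i t + cphi * X j t else X a t.
Proof.
rewrite mxE; under eq_bigr => b _ do rewrite mxE rotE.
have [_|ai] := eqVneq a i.
  rewrite -(sum_supp2 (fun b => X b t)); apply: eq_bigr => b _.
  by do 2?case: ifP => _; rewrite ?conjc_real ?conjc_row_i ?conjc0.
have [_|aj] := eqVneq a j.
  rewrite -(sum_supp2 (fun b => X b t)); apply: eq_bigr => b _.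
  by do 2?case: ifP => _; rewrite ?conjc_real ?conjc_col_j ?conjc0.
rewrite -[X a t](sum_supp1 (fun b => X b t)); apply: eq_bigr => b _.
by case: (b == a); rewrite ?conjc0 ?conjc1.
Qed.

Definition jstep A : 'M[C]_n := nuij i j (adj_mx U *m A *m U).

Lemma jstep_ij A : jstep A i j = 0.
Proof. by rewrite mxE !eqxx. Qed.

Lemma jstep_ji A : jstep A j i = 0.
Proof. by rewrite mxE !eqxx orbT. Qed.

Lemma jstep_out A a t : a != i -> a != j -> t != i -> t != j ->
  jstep A a t = A a t.
Proof.
move=> ai aj ti tj.
rewrite mxE (negbTE ai) (negbTE aj) /= mulmx_rotE (negbTE ti) (negbTE tj).
by rewrite adj_rot_mulmxE (negbTE ai) (negbTE aj).
Qed.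

Lemma jstep_row_i A t : t != i -> t != j ->
  jstep A i t = cphi * A i t + ealpha * sphi * A j t.
Proof.
move=> ti tj; rewrite mxE (negbTE tj) (negbTE ti) !andbF /= mulmx_rotE.
by rewrite (negbTE ti) (negbTE tj) adj_rot_mulmxE eqxx.
Qed.

Lemma jstep_row_j A t : t != i -> t != j ->
  jstep A j t = - (conjc ealpha * sphi) * A i t + cphi * A j t.
Proof.
move=> ti tj; rewrite mxE (negbTE tj) (negbTE ti) !andbF /= mulmx_rotE.
by rewrite (negbTE ti) (negbTE tj) adj_rot_mulmxE eqxx (negbTE neq_ji).
Qed.

Lemma jstep_col_i A a : a != i -> a != j ->
  jstep A a i = A a i * cphi + A a j * (conjc ealpha * sphi).
Proof.
move=> ai aj; rewrite mxE (negbTE ai) (negbTE aj) /= mulmx_rotE eqxx.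
by rewrite !adj_rot_mulmxE (negbTE ai) (negbTE aj).
Qed.

Lemma jstep_col_j A a : a != i -> a != j ->
  jstep A a j = A a i * (- ealpha * sphi) + A a j * cphi.
Proof.
move=> ai aj; rewrite mxE (negbTE ai) (negbTE aj) /= mulmx_rotE eqxx (negbTE neq_ji).
by rewrite !adj_rot_mulmxE (negbTE ai) (negbTE aj).
Qed.

Lemma sqnorm_jstep_row A t : t != i -> t != j ->
  sqnorm (jstep A i t) + sqnorm (jstep A j t) = sqnorm (A i t) + sqnorm (A j t).
Proof.
move=> ti tj; rewrite jstep_row_i // jstep_row_j //.
exact: sqnorm_rot2 (cos2Dsin2 _) (sqnorm_expi _).
Qed.

Lemma sqnorm_jstep_col A a : a != i -> a != j ->
  sqnorm (jstep A a i) + sqnorm (jstep A a j) = sqnorm (A a i) + sqnorm (A a j).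
Proof.
move=> ai aj; rewrite jstep_col_i // jstep_col_j //.
rewrite ![A a _ * _]mulrC mulNr -[X in - (X * _)]conjcK.
by apply: sqnorm_rot2 (cos2Dsin2 _) _; rewrite sqnorm_conj sqnorm_expi.
Qed.

Variable nu : R.
Hypothesis nu_ge0 : 0 <= nu.
Hypothesis nu_le_cos : nu <= `|cos phi|.

Let nu2_le_sqnorm_cos : nu ^+ 2 <= sqnorm cphi.
Proof.
rewrite sqnorm_real -[cos phi ^+ 2]real_normK ?num_real //.
have := normr_ge0 (cos phi); have := nu_le_cos; have := nu_ge0; nra.
Qed.

Let sqnorm_esin_le1 : sqnorm (ealpha * sphi) <= 1.
Proof.
rewrite sqnormM sqnorm_expi mul1r sqnorm_real.
by have := cos2Dsin2 phi; have := sqr_ge0 (cos phi); lra.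
Qed.

Lemma jstep_col_j_ge A a : a != i -> a != j ->
  nu ^+ 2 / 2 * sqnorm (A a j) - sqnorm (A a i) <= sqnorm (jstep A a j).
Proof.
move=> ai aj; rewrite jstep_col_j // [X in _ <= sqnorm X]addrC ![A a _ * _]mulrC.
apply: sqnorm_combination_ge nu2_le_sqnorm_cos _.
by rewrite mulNr sqnormN sqnorm_esin_le1.
Qed.

Lemma jstep_row_j_ge A t : t != i -> t != j ->
  nu ^+ 2 / 2 * sqnorm (A j t) - sqnorm (A i t) <= sqnorm (jstep A j t).
Proof.
move=> ti tj; rewrite jstep_row_j // [X in _ <= sqnorm X]addrC.
apply: sqnorm_combination_ge nu2_le_sqnorm_cos _.
by rewrite sqnormN sqnormM sqnorm_conj -sqnormM sqnorm_esin_le1.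
Qed.

End JacobiStep.

Section OffNorm.
Variable n : nat.
Implicit Types X A : 'M[C]_n.

Definition off (M : nat) X : R :=
  \sum_(a : 'I_n | (a < M)%N) \sum_(b : 'I_n | (b < M)%N && (a != b)) sqnorm (X a b).

Lemma off_ge0 M X : 0 <= off M X.
Proof. by do 2!apply: sumr_ge0 => ? _; apply: sqnorm_ge0. Qed.

Lemma sqnorm_le_off M X (a b : 'I_n) : (a < M)%N -> (b < M)%N -> a != b ->
  sqnorm (X a b) <= off M X.
Proof.
move=> aM bM ab; rewrite /off (bigD1 a) //= (bigD1 b) /=; last by rewrite bM ab.
rewrite -addrA lerDl addr_ge0 //; first by apply: sumr_ge0 => ? _; apply: sqnorm_ge0.
by do 2!apply: sumr_ge0 => ? _; apply: sqnorm_ge0.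
Qed.

Lemma bigD2 (S : pred 'I_n) (G : 'I_n -> R) (i j : 'I_n) : i != j -> S i -> S j ->
  \sum_(b | S b) G b = G i + G j + \sum_(b | S b && (b != i) && (b != j)) G b.
Proof.
move=> ij Si Sj; rewrite (bigD1 i) // (bigD1 j) /=; first by rewrite addrA.
by rewrite Sj eq_sym.
Qed.

Lemma sum_offdiag_pivot (P : pred 'I_n) (F : 'I_n -> 'I_n -> R) (i j : 'I_n) :
  i != j -> P i -> P j ->
  \sum_(a | P a) \sum_(b | P b && (a != b)) F a b =
    F i j + F j i
  + \sum_(t | P t && (t != i) && (t != j)) ((F i t + F j t) + (F t i + F t j))
  + \sum_(a | P a && (a != i) && (a != j))
      \sum_(b | P b && (a != b) && (b != i) && (b != j)) F a b.
Proof.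
move=> ij Pi Pj; have ji : j != i by rewrite eq_sym.
pose Q t := P t && (t != i) && (t != j).
have row_i : \sum_(b | P b && (i != b)) F i b = F i j + \sum_(b | Q b) F i b.
  rewrite (bigD1 j) /=; last by rewrite Pj ij.
  by congr (_ + _); apply: eq_bigl => b; rewrite [i == b]eq_sym.
have row_j : \sum_(b | P b && (j != b)) F j b = F j i + \sum_(b | Q b) F j b.
  rewrite (bigD1 i) /=; last by rewrite Pi ji.
  by congr (_ + _); apply: eq_bigl => b; rewrite [j == b]eq_sym andbAC.
have col_a a : Q a -> \sum_(b | P b && (a != b)) F a b =
    F a i + F a j + \sum_(b | P b && (a != b) && (b != i) && (b != j)) F a b.
  by case/andP=> /andP[_ ai] aj; rewrite (bigD2 _ ij) //; rewrite ?Pi ?Pj.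
rewrite (bigD2 _ ij Pi Pj) row_i row_j (eq_bigr _ col_a).
rewrite !big_split /=; ring.
Qed.

Section Pivot.
Variables (i j : 'I_n) (phi alpha : R).
Hypothesis neq_ij : i != j.
Local Notation step := (jstep i j phi alpha).

Lemma off_jstep M (A : 'M[C]_n) : (i < M)%N -> (j < M)%N ->
  off M (step A) = off M A - sqnorm (A i j) - sqnorm (A j i).
Proof.
move=> iM jM; rewrite /off.
rewrite !(sum_offdiag_pivot (P := fun a : 'I_n => (a < M)%N) _ neq_ij iM jM).
rewrite jstep_ij jstep_ji sqnorm0 !add0r.
have rows_cols : forall t : 'I_n, (t < M)%N && (t != i) && (t != j) ->
  sqnorm (step A i t) + sqnorm (step A j t) +
  (sqnorm (step A t i) + sqnorm (step A t j)) =
  sqnorm (A i t) + sqnorm (A j t) + (sqnorm (A t i) + sqnorm (A t j)).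
  by move=> t /andP[/andP[_ ti] tj]; rewrite sqnorm_jstep_row // sqnorm_jstep_col.
rewrite (eq_bigr _ rows_cols).
under [X in _ + X = _]eq_bigr => a /andP[/andP[_ ai] aj].
  under eq_bigr => b /andP[/andP[_ bi] bj] do rewrite jstep_out //.
  over.
lra.
Qed.

End Pivot.

Definition border (m : nat) (k : 'I_n) X : R :=
  \sum_(t : 'I_n | (t < m)%N) (sqnorm (X t k) + sqnorm (X k t)).

Lemma off_succ m (k : 'I_n) X : val k = m -> off m.+1 X = off m X + border m k X.
Proof.
rewrite /border => km.
have ltS_neq (b : 'I_n) : (b < m.+1)%N && (b != k) = (b < m)%N.
  rewrite ltnS leq_eqVlt -km val_eqE.
  by case: eqVneq => [->|_] /=; rewrite ?ltnn ?andbT.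
rewrite /off (bigD1 k) /= ?km //.
under eq_bigl => b do rewrite eq_sym ltS_neq.
under [X in _ + X]eq_bigl => a do rewrite ltS_neq.
under [X in _ + X]eq_bigr => a am.
  rewrite (bigD1 k) /=; last first.
    by rewrite km ltnSn; apply: contraTneq am => ->; rewrite km ltnn.
  under eq_bigl => b do rewrite andbAC ltS_neq.
  over.
rewrite [X in _ + X = _]big_split [X in _ = _ + X]big_split /=; ring.
Qed.

End OffNorm.

Section Sweeps.
Variables (n : nat) (nu : R).
Implicit Types (O : seq ('I_n * 'I_n)) (A B X : 'M[C]_n).

Fixpoint sweep O A B : Prop :=
  match O with
  | [::] => B = A
  | (i, j) :: O' =>
      exists phi alpha, nu <= `|cos phi| /\ sweep O' (jstep i j phi alpha A) B
  end.

Lemma jacobi_ops_sweep O J : jacobi_ops nu O J ->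
  forall A, exists B, sweep O A B /\ J *m ve A = ve B.
Proof.
elim: O J => [|[i j] O IH] J /=; first by move=> -> A; exists A; rewrite mul1mx.
case=> J' [M [/IH sweepJ' [[phi [alpha [nu_le annM]]] ->]]] A.
have [B [sweepB JB]] := sweepJ' (jstep i j phi alpha A).
by exists B; split; [exists phi, alpha | rewrite -mulmxA annM].
Qed.

Lemma sweep_cat O1 O2 A B : sweep (O1 ++ O2) A B ->
  exists2 A', sweep O1 A A' & sweep O2 A' B.
Proof.
elim: O1 A => [|[i j] O1 IH] A /=; first by exists A.
case=> phi [alpha [nu_le /IH [A' sweep1 sweep2]]].
by exists A' => //; exists phi, alpha.
Qed.

Definition pivots_in (M : nat) O :=
  all (fun p : 'I_n * 'I_n => [&& p.1 != p.2, (p.1 < M)%N & (p.2 < M)%N]) O.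

Lemma sweep_off_le M O A B : pivots_in M O -> sweep O A B -> off M B <= off M A.
Proof.
elim: O A => [|[i j] O IH] A /=; first by move=> _ ->.
case/andP=> /and3P[ij iM jM] pivO [phi [alpha [_ /(IH _ pivO) le_off]]].
apply: le_trans le_off _; rewrite off_jstep //.
by have := sqnorm_ge0 (A i j); have := sqnorm_ge0 (A j i); lra.
Qed.

Lemma sweep_border m (k : 'I_n) O A B : val k = m -> pivots_in m O -> sweep O A B ->
  border m k B = border m k A.
Proof.
move=> km; elim: O A => [|[i j] O IH] A /=; first by move=> _ ->.
case/andP=> /and3P[ij im jm] pivO [phi [alpha [_ /(IH _ pivO) ->]]].
apply: (@addrI _ (off m (jstep i j phi alpha A))).
rewrite -(off_succ _ km) !off_jstep ?ltnS ?(ltnW im) ?(ltnW jm) //.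
by rewrite (off_succ _ km); ring.
Qed.

End Sweeps.

Lemma half_sqr_gt0 (nu : R) : 0 < nu -> 0 < nu ^+ 2 / 2.
Proof. by move=> nu_gt0; rewrite divr_gt0 ?exprn_gt0. Qed.

Lemma half_sqr_le1 (nu : R) : 0 <= nu -> nu <= 1 -> nu ^+ 2 / 2 <= 1.
Proof. by move=> nu_ge0 nu_le1; have := exprn_ile1 2 nu_ge0 nu_le1; lra. Qed.

Lemma decay_step (th a D u v w : R) (l : nat) : 0 <= th -> th <= 1 -> 0 <= D ->
  th ^+ l * a - l%:R * D <= u -> v <= D -> th * u - v <= w ->
  th ^+ l.+1 * a - l.+1%:R * D <= w.
Proof.
move=> th0 th1 D0 lo_u vD lo_w; rewrite exprS -natr1.
have := ler_wpM2l th0 lo_u.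
have : th * (l%:R * D) <= l%:R * D by rewrite ler_piMl // mulr_ge0.
nra.
Qed.

Section ColumnSweep.
Variables (n : nat) (nu : R).
Hypotheses (nu_ge0 : 0 <= nu) (nu_le1 : nu <= 1).
Local Notation th := (nu ^+ 2 / 2).

Let th_ge0 : 0 <= th := divr_ge0 (sqr_ge0 nu) (ler0n _ 2).
Let th_le1 : th <= 1 := half_sqr_le1 nu_ge0 nu_le1.

Variables (m : nat) (k : 'I_n).
Hypothesis km : val k = m.

Lemma jstep_decay s t phi alpha (A : 'M[C]_n) D l (a b : R) :
  nu <= `|cos phi| -> s != k -> t != s -> t != k -> 0 <= D ->
  sqnorm (A t s) <= D -> sqnorm (A s t) <= D ->
  th ^+ l * a - l%:R * D <= sqnorm (A t k) ->
  th ^+ l * b - l%:R * D <= sqnorm (A k t) ->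
  th ^+ l.+1 * a - l.+1%:R * D <= sqnorm (jstep s k phi alpha A t k) /\
  th ^+ l.+1 * b - l.+1%:R * D <= sqnorm (jstep s k phi alpha A k t).
Proof.
move=> nu_le sk ts tk D_ge0 Dts Dst lo_a lo_b; split.
  apply: decay_step th_ge0 th_le1 D_ge0 lo_a Dts _.
  exact (jstep_col_j_ge alpha sk nu_ge0 nu_le A ts tk).
apply: decay_step th_ge0 th_le1 D_ge0 lo_b Dst _.
exact (jstep_row_j_ge alpha sk nu_ge0 nu_le A ts tk).
Qed.

(* [l] steps of the column sweep have already been performed; [D] bounds the
   entries of the leading block that the remaining steps have not touched yet. *)
Lemma column_sweep_off_le (S : seq 'I_n) l (A B : 'M[C]_n) (D : R) (a b : 'I_n -> R) :
  sweep nu [seq (s, k) | s <- S] A B -> uniq S -> all (fun s : 'I_n => (s < m)%N) S ->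
  0 <= D -> {in S &, forall s t, s != t -> sqnorm (A s t) <= D} ->
  {in S, forall s, th ^+ l * a s - l%:R * D <= sqnorm (A s k) /\
                   th ^+ l * b s - l%:R * D <= sqnorm (A k s)} ->
  (forall s, 0 <= a s + b s) ->
  off m.+1 B <= off m.+1 A -
    \sum_(s <- S) (th ^+ (l + size S) * (a s + b s) - 2 * (l + size S)%:R * D).
Proof.
move=> + + + D_ge0 + + ab_ge0.
elim: S l A => [|s S IH] l A /=; first by move=> -> *; rewrite big_nil subr0.
case=> phi [alpha [nu_le sweepB]] /andP[sS uS] /andP[sm allS] D_bound lower.
have sk : s != k by apply: contraTneq sm => ->; rewrite km ltnn.
have tk t : t \in S -> t != k.
  by move=> tS; apply: contraTneq (allP allS t tS) => ->; rewrite km ltnn.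
have ts t : t \in S -> t != s by move=> tS; apply: contraTneq tS => ->.
have inS t : t \in S -> t \in s :: S by rewrite inE => ->; rewrite orbT.
have D_bound1 :
    {in S &, forall t r, t != r -> sqnorm (jstep s k phi alpha A t r) <= D}.
  move=> t r tS rS tr.
  rewrite jstep_out ?(ts _ tS) ?(ts _ rS) ?(tk _ tS) ?(tk _ rS) //.
  exact: D_bound t r (inS _ tS) (inS _ rS) tr.
have lower1 : {in S, forall t,
    th ^+ l.+1 * a t - l.+1%:R * D <= sqnorm (jstep s k phi alpha A t k) /\
    th ^+ l.+1 * b t - l.+1%:R * D <= sqnorm (jstep s k phi alpha A k t)}.
  move=> t tS; have [lo_a lo_b] := lower t (inS _ tS).
  have s_in := mem_head s S.
  apply: jstep_decay nu_le sk (ts t tS) (tk t tS) D_ge0 _ _ lo_a lo_b.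
    exact: D_bound t s (inS _ tS) s_in (ts t tS).
  have st : s != t by rewrite eq_sym ts.
  exact: D_bound s t s_in (inS _ tS) st.
have := IH l.+1 _ sweepB uS allS D_bound1 lower1.
rewrite off_jstep ?ltnS ?(ltnW sm) ?km // big_cons addSnnS.
have [lo_a lo_b] := lower s (mem_head s S).
set N := (l + (size S).+1)%N.
have th_pow : th ^+ N * (a s + b s) <= th ^+ l * a s + th ^+ l * b s.
  rewrite -mulrDr ler_wpM2r // -[th ^+ l]mulr1 exprD ler_wpM2l ?exprn_ge0 //.
  exact: exprn_ile1.
have : l%:R * D <= N%:R * D by rewrite ler_wpM2r // ler_nat leq_addr.
lra.
Qed.

End ColumnSweep.

Lemma two_bounds_contraction (q k L X D P O : R) :
  0 <= q <= 1 -> 0 <= k <= 1 -> 0 <= L -> 0 <= D -> 0 <= O -> D <= q * O -> 0 <= P ->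
  X <= D + P -> X <= D + P - (k * P - L * D) ->
  X <= (1 - (1 - q) * k / (2 * (L + 1))) * (O + P).
Proof.
move=> /andP[q0 q1] /andP[k0 k1] L0 D0 O0 DO P0 X_le1 X_le2.
set lam := (1 - q) / (2 * (L + 1)).
have lamL : lam * (2 * (L + 1)) = 1 - q by rewrite /lam mulfVK // gt_eqF //; lra.
have lam0 : 0 <= lam by rewrite /lam divr_ge0 //; lra.
have -> : (1 - q) * k / (2 * (L + 1)) = lam * k by rewrite /lam mulrAC.
have X_mix : X <= D + P - lam * k * P + lam * L * D.
  have : 0 <= (1 - lam) * (D + P - X) by rewrite mulr_ge0 //; nra.
  have : 0 <= lam * (D + P - (k * P - L * D) - X) by rewrite mulr_ge0 //; lra.
  nra.
have : (1 + lam * L) * D <= (1 + lam * L) * (q * O).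
  by rewrite ler_wpM2l // addr_ge0 // mulr_ge0.
have coef_le1 : (1 + lam * L) * q + lam * k <= 1.
  have : lam * L * q <= lam * L by rewrite ler_piMr // mulr_ge0.
  have : lam * k <= lam by rewrite ler_piMr.
  nra.
have : ((1 + lam * L) * q + lam * k) * O <= O.
  by rewrite ler_piMl // addr_ge0 ?mulr_ge0 // addr_ge0 // mulr_ge0.
nra.
Qed.

(* [rate th m.+1] is the factor given by [two_bounds_contraction] for
   [q = rate th m], [k = th ^+ m] and [L = 2 m^2]. *)
Fixpoint rate (th : R) (m : nat) : R :=
  if m is m'.+1 then 1 - (1 - rate th m') * th ^+ m' / (2 * (2 * (m' * m')%:R + 1))
  else 0.

Lemma rate_bounds th m : 0 < th -> th <= 1 -> 0 <= rate th m < 1.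
Proof.
move=> th_gt0 th_le1; elim: m => [|m /andP[q0 q1]] /=; first by rewrite lexx ltr01.
set d := 2 * _.
have d_ge2 : 2 <= d by rewrite ler_peMr // lerDr mulr_ge0.
have k_gt0 : 0 < (1 - rate th m) * th ^+ m by rewrite mulr_gt0 ?exprn_gt0 // subr_gt0.
have k_le1 : (1 - rate th m) * th ^+ m <= 1.
  by have := exprn_ile1 m (ltW th_gt0) th_le1; nra.
apply/andP; split; last by rewrite ltrBlDr ltrDl divr_gt0 //; lra.
by rewrite subr_ge0 ler_pdivrMr; lra.
Qed.

Section ColumnCyclic.
Variables (n : nat) (nu : R) (tau : forall j : 'I_n, {perm 'I_j}).
Hypotheses (nu_gt0 : 0 < nu) (nu_le1 : nu <= 1).
Local Notation th := (nu ^+ 2 / 2).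

Definition column_rows (j : 'I_n) : seq 'I_n :=
  [seq widen_lt (tau j r) | r <- enum 'I_j].

Definition column_pivots (j : 'I_n) : seq ('I_n * 'I_n) :=
  [seq (widen_lt (tau j r), j) | r <- enum 'I_j].

Definition leading_pivots (m : nat) : seq ('I_n * 'I_n) :=
  flatten [seq column_pivots j | j <- take m (enum 'I_n)].

Lemma column_pivotsE (j : 'I_n) : column_pivots j = [seq (s, j) | s <- column_rows j].
Proof. by rewrite -map_comp. Qed.

Lemma column_rows_uniq (j : 'I_n) : uniq (column_rows j).
Proof.
rewrite map_inj_uniq ?enum_uniq // => r r' /(congr1 val) /= /val_inj.
exact: perm_inj.
Qed.

Lemma column_rows_lt (j : 'I_n) : all (fun s : 'I_n => (s < j)%N) (column_rows j).
Proof. by apply/allP => _ /mapP[r _ ->]; exact: (ltn_ord (tau j r)). Qed.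

Lemma sum_column_rows (j : 'I_n) (G : 'I_n -> R) :
  \sum_(s <- column_rows j) G s = \sum_(t : 'I_n | (t < j)%N) G t.
Proof.
rewrite [RHS](big_ord_narrow (ltnW (ltn_ord j))) big_map big_enum /=.
by rewrite [RHS](reindex_inj (@perm_inj _ (tau j))).
Qed.

Lemma mem_take_enum_lt m (j : 'I_n) : j \in take m (enum 'I_n) -> (j < m)%N.
Proof.
move=> /(map_f val); rewrite map_take val_enum_ord take_iota mem_iota.
by case/andP=> _ /leq_trans; apply; rewrite geq_minl.
Qed.

Lemma pivots_in_column (j : 'I_n) M : (j < M)%N -> pivots_in M (column_pivots j).
Proof.
move=> jM; apply/allP => _ /mapP[r _ ->] /=.
have rj : (widen_lt (tau j r) < j)%N := ltn_ord (tau j r).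
by rewrite (ltn_trans rj jM) jM !andbT; apply: contraTneq rj => ->; rewrite ltnn.
Qed.

Lemma pivots_in_leading m : pivots_in m (leading_pivots m).
Proof.
apply/allP => p /flattenP[_ /mapP[j /mem_take_enum_lt jm ->]].
exact: (allP (pivots_in_column jm)).
Qed.

Lemma leading_pivots_succ m (mn : (m < n)%N) :
  leading_pivots m.+1 = leading_pivots m ++ column_pivots (Ordinal mn).
Proof.
rewrite /leading_pivots (take_nth (Ordinal mn)) ?size_enum_ord //.
rewrite map_rcons flatten_rcons; congr (_ ++ column_pivots _).
by apply: val_inj; rewrite /= nth_enum_ord.
Qed.

Lemma off_sweep_column (j : 'I_n) (A B : 'M[C]_n) : sweep nu (column_pivots j) A B ->
  off j.+1 B <= off j.+1 A - (th ^+ j * border j j A - 2 * (j * j)%:R * off j A).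
Proof.
rewrite column_pivotsE => sweepB.
have D_bound : {in column_rows j &, forall s t, s != t -> sqnorm (A s t) <= off j A}.
  move=> s t /(allP (column_rows_lt j)) sj /(allP (column_rows_lt j)) tj.
  exact: sqnorm_le_off.
have lower0 : {in column_rows j, forall s,
    th ^+ 0 * sqnorm (A s j) - 0%:R * off j A <= sqnorm (A s j) /\
    th ^+ 0 * sqnorm (A j s) - 0%:R * off j A <= sqnorm (A j s)}.
  by move=> s _; rewrite expr0 mul0r !subr0 !mul1r.
have := column_sweep_off_le (ltW nu_gt0) nu_le1 (erefl (val j)) sweepB
  (column_rows_uniq j) (column_rows_lt j) (off_ge0 _ _) D_bound lower0
  (fun s => addr_ge0 (sqnorm_ge0 _) (sqnorm_ge0 _)).
rewrite add0n sumrB -mulr_sumr big_const_seq count_predT iter_addr_0 sum_column_rows.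
rewrite size_map size_enum_ord -[_ *+ j]mulr_natl.
have -> : j%:R * (2 * j%:R * off j A) = 2 * (j * j)%:R * off j A.
  by rewrite natrM; ring.
exact: id.
Qed.

Lemma off_sweep_leading m (A B : 'M[C]_n) : (m <= n)%N ->
  sweep nu (leading_pivots m) A B -> off m B <= rate th m * off m A.
Proof.
have th_gt0 := half_sqr_gt0 nu_gt0; have th_ge0 := ltW th_gt0.
have th_le1 := half_sqr_le1 (ltW nu_gt0) nu_le1.
elim: m A B => [|m IH] A B mn.
  by move=> _; rewrite /off big_pred0 ?mul0r // => a; rewrite ltn0.
rewrite (leading_pivots_succ mn) => /sweep_cat[A' sweepA' sweepB].
set k := Ordinal mn.
have off_A' := IH A A' (ltnW mn) sweepA'.
have border_A' := sweep_border (erefl (val k)) (pivots_in_leading m) sweepA'.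
have col := off_sweep_column sweepB.
have mono := sweep_off_le (pivots_in_column (j := k) (ltnSn m)) sweepB.
have [q0 q1] := andP (rate_bounds m th_gt0 th_le1).
rewrite /= [off m.+1 A](off_succ _ (erefl (val k))) -border_A'.
rewrite [off m.+1 A'](off_succ _ (erefl (val k))) in mono col.
apply: two_bounds_contraction mono col => //.
- by rewrite q0 (ltW q1).
- by rewrite exprn_ge0 ?exprn_ile1.
- by rewrite mulr_ge0 ?ler0n.
- exact: off_ge0.
- exact: off_ge0.
- by rewrite /border sumr_ge0 // => t _; rewrite addr_ge0 ?sqnorm_ge0.
Qed.

End ColumnCyclic.

Section PairIndex.
Variable n : nat.
Local Notation N := (Npairs n).
Local Open Scope nat_scope.

Lemma pidxE p q : pidx p q = 'C(q, 2) + p.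
Proof. by rewrite bin2. Qed.

Lemma pidx_lt p q : p < q -> q < n -> pidx p q < N.
Proof.
move=> pq qn; rewrite pidxE /Npairs -bin2.
by have := leq_bin2l 2 qn; rewrite binS bin1; lia.
Qed.

Lemma pidx_inj p q p' q' : p < q -> p' < q' -> pidx p q = pidx p' q' ->
  p = p' /\ q = q'.
Proof.
rewrite !pidxE => pq pq' e.
have [qq'|qq'|qq'] := ltngtP q q'; last by subst q'; split=> //; lia.
- by have := leq_bin2l 2 qq'; rewrite binS bin1; lia.
- by have := leq_bin2l 2 qq'; rewrite binS bin1; lia.
Qed.

Lemma pidx_surj k : k < N -> exists p q, [/\ p < q, q < n & pidx p q = k].
Proof.
rewrite /Npairs -bin2; elim: n k => [|m IH] k; first by rewrite bin_small.
rewrite binS bin1 => km; have [kl|kl] := ltnP k 'C(m, 2).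
  by have [p [q [pq qm <-]]] := IH k kl; exists p, q; split=> //; exact: ltnW.
by exists (k - 'C(m, 2)), m; rewrite pidxE; split=> //; lia.
Qed.

Definition ve_index (p q : 'I_n) : nat := if p < q then pidx p q else N + pidx q p.

Lemma ve_index_lt (p q : 'I_n) : p != q -> ve_index p q < N + N.
Proof.
rewrite /ve_index -val_eqE => /= pq; case: (ltnP p q) => [lt_pq|le_qp].
  by have := pidx_lt lt_pq (ltn_ord q); lia.
by rewrite ltn_add2l pidx_lt // ltn_neqAle eq_sym pq.
Qed.

Lemma ve_index_inj (p q p' q' : 'I_n) : p != q -> p' != q' ->
  ve_index p q = ve_index p' q' -> p = p' /\ q = q'.
Proof.
rewrite /ve_index -!val_eqE /= => pq pq'.
case: (ltnP p q) => h; case: (ltnP p' q') => h' e.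
- by have [/val_inj -> /val_inj ->] := pidx_inj h h' e.
- by have := pidx_lt h (ltn_ord q); lia.
- by have := pidx_lt h' (ltn_ord q'); lia.
- have lt_qp : q < p by rewrite ltn_neqAle eq_sym pq.
  have lt_qp' : q' < p' by rewrite ltn_neqAle eq_sym pq'.
  by have [/val_inj -> /val_inj ->] := pidx_inj lt_qp lt_qp' (addnI e).
Qed.

Lemma ve_index_surj (k : 'I_(N + N)) :
  exists2 pq : 'I_n * 'I_n, pq.1 != pq.2 & val k = ve_index pq.1 pq.2.
Proof.
have [kN|kN] := ltnP k N.
  have [p [q [pq qn e]]] := pidx_surj kN.
  exists (Ordinal (ltn_trans pq qn), Ordinal qn); rewrite /= -?val_eqE /=.
    by rewrite ltn_eqF.
  by rewrite /ve_index /= pq e.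
have kN' : k - N < N by have := ltn_ord k; lia.
have [p [q [pq qn e]]] := pidx_surj kN'.
exists (Ordinal qn, Ordinal (ltn_trans pq qn)); rewrite /= -?val_eqE /=.
  by rewrite gtn_eqF.
by rewrite /ve_index /= ltnNge (ltnW pq) /= e; lia.
Qed.

End PairIndex.
Section VeIsometry.
Variable n : nat.
Local Notation N := (Npairs n).
Implicit Types X : 'M[C]_n.

Definition ve_pair (k : 'I_(N + N)) (p q : 'I_n) : bool :=
  (p != q) && (val k == ve_index p q).

Lemma ve_pair_uniq k (pq pq' : 'I_n * 'I_n) :
  ve_pair k pq.1 pq.2 -> ve_pair k pq'.1 pq'.2 -> pq = pq'.
Proof.
case: pq pq' => [p q] [p' q'] /= /andP[pq /eqP e] /andP[pq' /eqP e'].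
by have [-> ->] := ve_index_inj pq pq' (etrans (esym e) e').
Qed.

Lemma ve_pair_index_uniq k k' (p q : 'I_n) :
  ve_pair k p q -> ve_pair k' p q -> k = k'.
Proof. by move=> /andP[_ /eqP e] /andP[_ /eqP e']; apply: val_inj; rewrite e e'. Qed.

Lemma ve_coordE X k : ve X k 0 = \sum_(pq | ve_pair k pq.1 pq.2) X pq.1 pq.2.
Proof.
pose up (p q : 'I_n) := if (p < q)%N && (val k == pidx p q) then X p q else 0.
pose low (p q : 'I_n) := if (q < p)%N && (val k == N + pidx q p)%N then X p q else 0.
have split_entry (p q : 'I_n) : (if (p < q)%N && (val k == pidx p q) then X p q
      else if (p < q)%N && (val k == N + pidx p q)%N then X q p else 0)
    = up p q + low q p.
  rewrite /up /low; case: (ltnP p q) => //= pq; last by rewrite addr0.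
  have := pidx_lt pq (ltn_ord q).
  case: eqVneq => [-> lt|_ _]; last by rewrite add0r.
  by rewrite ifF ?addr0 //; apply/eqP; lia.
have split_pair (p q : 'I_n) : (if ve_pair k p q then X p q else 0) = up p q + low p q.
  rewrite /ve_pair /ve_index /up /low -val_eqE neq_ltn.
  by case: ltngtP => _ /=; rewrite ?addr0 ?add0r.
rewrite mxE [RHS]big_mkcond.
transitivity (\sum_p \sum_q (if ve_pair k p q then X p q else 0)); last first.
  exact (pair_bigA _ (fun p q => if ve_pair k p q then X p q else 0)).
rewrite (eq_bigr (fun p => \sum_q (up p q + low q p))); last first.
  by move=> p _; apply: eq_bigr => q _; exact: split_entry.
rewrite [RHS](eq_bigr (fun p => \sum_q (up p q + low p q))); last first.
  by move=> p _; apply: eq_bigr => q _; exact: split_pair.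
under eq_bigr => p _ do rewrite big_split.
under [RHS]eq_bigr => p _ do rewrite big_split.
by rewrite !big_split /= [X in _ + X = _]exchange_big.
Qed.

Lemma sqnorm_sum_uniq (I : finType) (c : pred I) (v : I -> C) :
  (forall x y, c x -> c y -> x = y) ->
  sqnorm (\sum_(x | c x) v x) = \sum_(x | c x) sqnorm (v x).
Proof.
move=> c_uniq; have [x0 cx0|c0] := pickP c; last by rewrite !big_pred0 ?sqnorm0.
have c1 : c =1 pred1 x0 by move=> y; apply/idP/eqP => [cy|->] //; exact: c_uniq.
by rewrite !(big_pred1 x0 c1).
Qed.

Lemma off_pairs X :
  off n X = \sum_(pq : 'I_n * 'I_n | pq.1 != pq.2) sqnorm (X pq.1 pq.2).
Proof.
by rewrite /off pair_big_dep; apply: eq_bigl => -[a b] /=; rewrite !ltn_ord.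
Qed.

Lemma vnorm_ve X : vnorm (ve X) = Num.sqrt (off n X).
Proof.
rewrite /vnorm off_pairs; congr Num.sqrt.
transitivity (\sum_k sqnorm (ve X k 0)) => //.
under eq_bigr => k _ do rewrite ve_coordE (sqnorm_sum_uniq _ (@ve_pair_uniq k)).
rewrite (exchange_big_dep (fun pq : 'I_n * 'I_n => pq.1 != pq.2)) /=; last first.
  by move=> k pq _ /andP[].
apply: eq_bigr => pq pq_neq; rewrite (big_pred1 (Ordinal (ve_index_lt pq_neq))) //.
by move=> k /=; rewrite /ve_pair pq_neq -val_eqE.
Qed.

Lemma ve_surj (x : 'cV[C]_(N + N)) : exists X, ve X = x.
Proof.
exists (\matrix_(p, q) \sum_(k | ve_pair k p q) x k 0).
apply/matrixP => k z; rewrite (ord1 z) ve_coordE.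
have [pq0 pq0_neq k_pq0] := ve_index_surj k.
have k_pq0' : ve_pair k pq0.1 pq0.2 by rewrite /ve_pair pq0_neq k_pq0 eqxx.
rewrite (big_pred1 pq0); last first.
  by move=> pq /=; apply/idP/eqP => [k_pq|->] //; exact: ve_pair_uniq k_pq k_pq0'.
rewrite mxE (big_pred1 k) // => k' /=.
by apply/idP/eqP => [k'_pq|->] //; exact: ve_pair_index_uniq k'_pq k_pq0'.
Qed.

End VeIsometry.

Lemma spec_norm_le m (A : 'M[C]_m) (c : R) :
  (forall x, vnorm x <= 1 -> vnorm (A *m x) <= c) -> spec_norm A <= c.
Proof.
move=> bound; apply: ge_sup; last by move=> _ [x x_le1 <-]; exact: bound.
exists (vnorm (A *m 0)), 0 => //=.
by rewrite /vnorm big1 ?sqrtr0 ?ler01 // => k _; rewrite mxE; exact: sqnorm0.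
Qed.

Lemma col_cyclic_leading n (O : seq ('I_n * 'I_n)) :
  col_cyclic O -> exists tau, O = leading_pivots tau n.
Proof.
by case=> tau ->; exists tau; rewrite /leading_pivots take_oversize ?size_enum_ord.
Qed.

Lemma jacobi_op_vnorm_le n (nu : R) O (J : 'M[C]_(Npairs n + Npairs n)) x :
  0 < nu -> nu <= 1 -> col_cyclic O -> jacobi_ops nu O J ->
  vnorm (J *m x) <= Num.sqrt (rate (nu ^+ 2 / 2) n) * vnorm x.
Proof.
move=> nu_gt0 nu_le1 /col_cyclic_leading[tau ->] opsJ.
have [X <-] := ve_surj x.
have [B [sweepB ->]] := jacobi_ops_sweep opsJ X.
have /andP[rate_ge0 _] :=
  rate_bounds n (half_sqr_gt0 nu_gt0) (half_sqr_le1 (ltW nu_gt0) nu_le1).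
rewrite !vnorm_ve -sqrtrM // ler_wsqrtr //.
exact (off_sweep_leading nu_gt0 nu_le1 (leqnn n) sweepB).
Qed.

End JacobiContraction.

Theorem theorem3p2 (R : realType) (n : nat) (nu : R) :
  (2 <= n)%N -> 0 < nu -> nu <= 1 ->
  exists mu : R, 0 <= mu /\ mu < 1 /\
    forall (O : seq ('I_n * 'I_n)) (J : 'M[R[i]]_(Npairs n + Npairs n)),
      col_cyclic O -> jacobi_ops nu O J -> spec_norm J <= mu.
Proof.
(* The bound holds for every [n]. *)
move=> _ nu_gt0 nu_le1.
have /andP[rate_ge0 rate_lt1] :=
  rate_bounds n (half_sqr_gt0 nu_gt0) (half_sqr_le1 (ltW nu_gt0) nu_le1).
exists (Num.sqrt (rate (nu ^+ 2 / 2) n)).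
split; first exact: sqrtr_ge0.
split; first by rewrite -[X in _ < X]sqrtr1 ltr_sqrt.
move=> O J cycO opsJ; apply: spec_norm_le => x x_le1.
apply: le_trans (jacobi_op_vnorm_le x nu_gt0 nu_le1 cycO opsJ) _.
by rewrite ler_piMr ?sqrtr_ge0.
Qed.
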